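(* Let $f_i:\mathbb{R}^{n_{i-1}}\to\mathbb{R}^{n_i}$ and $g_i:\mathbb{R}^{n_i}\to\mathbb{R}^{n_{i-1}}$, let $\mathbf{h}_{i-1}\in\mathbb{R}^{n_{i-1}}$ and $\mathbf{h}_i=f_i(\mathbf{h}_{i-1})$. For a target $\hat{\mathbf{h}}_i\in\mathbb{R}^{n_i}$, define the difference-target-propagation target of layer $i-1$ by $$\hat{\mathbf{h}}_{i-1}=\mathbf{h}_{i-1}+g_i(\hat{\mathbf{h}}_i)-g_i(\mathbf{h}_i).$$ Assume $f_i$ is differentiable at $\mathbf{h}_{i-1}$ with Jacobian $J_{f_i}$ and $g_i$ is differentiable at $\mathbf{h}_i$ with Jacobian $J_{g_i}$, and that the largest eigenvalue of $(I-J_{f_i}J_{g_i})^T(I-J_{f_i}J_{g_i})$ is less than $1$. Then, if $\hat{\mathbf{h}}_i-\mathbf{h}_i$ is sufficiently small (and nonzero), i.e. there is $\delta>0$ such that for every $\hat{\mathbf{h}}_i$ with $0<\|\hat{\mathbf{h}}_i-\mathbf{h}_i\|_2<\delta$, $$\|\hat{\mathbf{h}}_i-f_i(\hat{\mathbf{h}}_{i-1})\|_2^2<\|\hat{\mathbf{h}}_i-\mathbf{h}_i\|_2^2.$$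
   Context: In a layered network $\mathbf{h}_i=f_i(\mathbf{h}_{i-1})$, $g_i$ is a learned feedback map meant to approximately invert $f_i$; $\hat{\mathbf{h}}_i$ is a target value for layer $i$. *)

From HB Require Import structures.
From mathcomp Require Import all_boot all_order all_algebra.
From mathcomp Require Import all_classical all_reals all_analysis.
Set Implicit Arguments. Unset Strict Implicit. Unset Printing Implicit Defensive.
Import Order.TTheory GRing.Theory Num.Theory.
Local Open Scope ring_scope.

(* Euclidean (l2) norm on R^n; the default norm on 'rV is the max norm. *)
Definition norm2 (R : realType) (n : nat) (v : 'rV[R]_n) : R :=
  Num.sqrt (\sum_(j < n) v ord0 j ^+ 2).

(* Mathematical Jacobian (n x m matrix, acting on column vectors) of
   f : R^m -> R^n at p.  The library's 'J f p acts on row vectors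
   (D_v f p = v *m 'J f p), so it is the transpose. *)
Definition Jac (R : realType) (m n : nat) (f : 'rV[R]_m -> 'rV[R]_n)
  (p : 'rV[R]_m) : 'M[R]_(n, m) := (jacobian f p)^T.

Definition dtp_target (R : realType) (m n : nat) (g : 'rV[R]_n -> 'rV[R]_m)
  (h_prev : 'rV[R]_m) (h : 'rV[R]_n) (hhat : 'rV[R]_n) : 'rV[R]_m :=
  h_prev + g hhat - g h.

(* Write Phi for the residual hhat |-> hhat - f (h_prev + g hhat - g h), with
   h = f h_prev.  It vanishes at h and, by the chain rule, its differential
   there is v |-> v *m C with C = 1 - 'J g h *m 'J f h_prev; since the
   library's Jacobians act on row vectors, C is the transpose of the paper's
   I - J_f J_g, and the hypothesis is about C *m C^T.  A maximiser u of
   |v C|^2 on the unit sphere is an eigenvector of C C^T for the eigenvalue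
   |u C|^2, so |v C|^2 <= c |v|^2 for some c < 1.  The first-order remainder
   of Phi is o(|hhat - h|), hence |Phi hhat| < |hhat - h| close to h. *)

From HB Require Import structures.
From mathcomp Require Import all_boot all_order all_algebra.
From mathcomp Require Import all_classical all_reals all_analysis.
From mathcomp Require Import lra ring.
Import Order.TTheory GRing.Theory Num.Theory numFieldNormedType.Exports.
Local Open Scope ring_scope.

Section EuclideanDot.
Context {R : realType} {n : nat}.
Implicit Types (x y z : 'rV[R]_n) (a : R).

Definition dot x y : R := (x *m y^T) ord0 ord0.

Lemma dotE x y : dot x y = \sum_j x ord0 j * y ord0 j.
Proof. by rewrite /dot !mxE; apply: eq_bigr => j _; rewrite mxE. Qed.

Lemma dotC x y : dot x y = dot y x.
Proof. by rewrite !dotE; apply: eq_bigr => j _; rewrite mulrC. Qed.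

Lemma dotDl x y z : dot (x + y) z = dot x z + dot y z.
Proof. by rewrite /dot mulmxDl mxE. Qed.

Lemma dotZl a x z : dot (a *: x) z = a * dot x z.
Proof. by rewrite /dot -scalemxAl mxE. Qed.

Lemma dotNl x z : dot (- x) z = - dot x z.
Proof. by rewrite -scaleN1r dotZl mulN1r. Qed.

Lemma dotDr x y z : dot z (x + y) = dot z x + dot z y.
Proof. by rewrite dotC dotDl !(dotC z). Qed.

Lemma dotZr a x z : dot z (a *: x) = a * dot z x.
Proof. by rewrite dotC dotZl dotC. Qed.

Lemma dotNr x z : dot z (- x) = - dot z x.
Proof. by rewrite dotC dotNl dotC. Qed.

Lemma dot0l z : dot 0 z = 0.
Proof. by rewrite /dot mul0mx mxE. Qed.

Lemma dot_ge0 x : 0 <= dot x x.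
Proof. by rewrite dotE sumr_ge0 // => j _; rewrite -expr2 sqr_ge0. Qed.

Lemma dot_eq0 x : dot x x = 0 -> x = 0.
Proof.
rewrite dotE => /eqP; rewrite psumr_eq0 => [/allP x0|j _]; last first.
  by rewrite -expr2 sqr_ge0.
apply/rowP => j; rewrite mxE; apply/eqP.
by have := x0 j (mem_index_enum j); rewrite implyTb mulf_eq0 orbb.
Qed.

Lemma norm2_sq x : norm2 x ^+ 2 = dot x x.
Proof.
rewrite sqr_sqrtr; last by apply: sumr_ge0 => j _; exact: sqr_ge0.
by rewrite dotE; apply: eq_bigr => j _; rewrite expr2.
Qed.

Lemma dotD_le {s} x y : 0 < s ->
  s * dot (x + y) (x + y) <= s * (1 + s) * dot x x + (s + 1) * dot y y.
Proof.
move=> s_gt0; have := dot_ge0 (s *: x - y).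
rewrite !dotDl !dotDr !dotNl !dotNr !dotZl !dotZr (dotC y x).
move: (dot x x) (dot x y) (dot y y) (dot_ge0 x) (dot_ge0 y) => a b c a0 c0.
nra.
Qed.

Lemma normr_le_norm2 x : `|x| <= norm2 x.
Proof.
rewrite -[X in X <= _]/(mx_norm x) mx_normrE.
apply: bigmax_le => [|[i j] _ /=]; first exact: sqrtr_ge0.
rewrite (ord1 i) /norm2 -(sqrtr_sqr (x ord0 j)); apply: ler_wsqrtr.
by rewrite (bigD1 j) //= lerDl; apply: sumr_ge0 => k _; exact: sqr_ge0.
Qed.

Lemma dot_le_normr x : dot x x <= n%:R * `|x| ^+ 2.
Proof.
rewrite dotE mulr_natl -[n in _ *+ n]card_ord -sumr_const; apply: ler_sum => j _.
rewrite -expr2 -real_normK ?num_real // lerXn2r ?nnegrE ?normr_ge0 //.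
rewrite -[X in _ <= X]/(mx_norm x) mx_normrE.
exact: (le_bigmax _ (fun ij : 'I_1 * 'I_n => `|x ij.1 ij.2|) (ord0, j)).
Qed.

End EuclideanDot.

Lemma dot_mulmx {R : realType} {m n : nat} (x : 'rV[R]_m) (A : 'M[R]_(m, n)) y :
  dot (x *m A) y = dot x (y *m A^T).
Proof. by rewrite /dot trmx_mul trmxK mulmxA. Qed.

Lemma continuous_sum {R : realType} {T : topologicalType} {I : Type} (r : seq I)
  (F : I -> T -> R) : (forall i, continuous (F i)) ->
  continuous (fun x => \sum_(i <- r) F i x).
Proof.
move=> Fc; elim: r => [|a r IH].
  by under eq_fun do rewrite big_nil; exact: cst_continuous.
under eq_fun do rewrite big_cons.
by move=> x; exact: (cvgD (Fc a x) (IH x)).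
Qed.

Lemma continuous_dot_mulmx {R : realType} {m n : nat} (B : 'M[R]_(m, n)) :
  continuous (fun v : 'rV[R]_m => dot (v *m B) (v *m B)).
Proof.
have Bj_cont j : continuous (fun v : 'rV[R]_m => (v *m B) ord0 j).
  under eq_fun do rewrite mxE.
  apply: continuous_sum => i v.
  exact: (cvgM (@coord_continuous R 1 m ord0 i v) (@cst_continuous _ R (B i j) v)).
under eq_fun do rewrite dotE.
by apply: continuous_sum => j v; exact: (cvgM (Bj_cont j v) (Bj_cont j v)).
Qed.

Lemma dot_mulmx_attains_max {R : realType} {n : nat} (C : 'M[R]_n.+1) :
  exists2 u : 'rV[R]_n.+1, dot u u = 1 &
    forall v, dot (v *m C) (v *m C) <= dot (u *m C) (u *m C) * dot v v.
Proof.
pose sphere := [set v : 'rV[R]_n.+1 | dot v v = 1]%classic.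
have sphere_closed : closed sphere.
  apply: (@preimage_closed _ _ (fun v : 'rV[R]_n.+1 => dot v v) [set 1]%classic).
    move=> v _; have := continuous_dot_mulmx (1%:M : 'M[R]_n.+1) v.
    by under eq_fun do rewrite mulmx1.
  exact: closed_eq.
have sphere_bounded : bounded_near id (globally sphere).
  rewrite /bounded_near; near=> M => v /= vv1; apply: le_trans (normr_le_norm2 v) _.
  have /eqP -> : norm2 v == 1 by rewrite -sqrp_eq1 ?sqrtr_ge0 // norm2_sq vv1.
  by near: M; exact: nbhs_pinfty_ge.
have e0_sphere : sphere (\row_j (j == ord0)%:R : 'rV[R]_n.+1).
  rewrite /sphere /= dotE big_ord_recl !mxE eqxx mul1r big1 ?addr0 // => i _.
  by rewrite !mxE mul0r.
have [u u_sphere u_max] := compact_EVT_max (ex_intro _ _ e0_sphere)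
  (bounded_closed_compact sphere_bounded sphere_closed)
  (continuous_subspaceT (continuous_dot_mulmx C)).
move: u_sphere; rewrite inE => uu1; exists u => // v.
have [->|v_neq0] := eqVneq v 0; first by rewrite mul0mx !dot0l mulr0.
have vv_gt0 : 0 < dot v v.
  by rewrite lt_def dot_ge0 andbT; apply: contra_neq v_neq0 => /dot_eq0.
pose s := Num.sqrt (dot v v).
have s_gt0 : 0 < s by rewrite sqrtr_gt0.
have s2 : s ^+ 2 = dot v v by rewrite sqr_sqrtr // ltW.
have sv_sphere : s^-1 *: v \in sphere.
  by rewrite inE /sphere /= dotZl dotZr mulrA -expr2 exprVn s2 mulVf // gt_eqF.
have := u_max _ sv_sphere; rewrite -scalemxAl dotZl dotZr mulrA -expr2 exprVn s2.
by rewrite ler_pdivrMl // mulrC.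
Unshelve. all: by end_near.
Qed.

Lemma quadratic_le0_eq0 {R : realType} (a b : R) :
  (forall t, 2 * t * b + t ^+ 2 * a <= 0) -> b = 0.
Proof.
move=> le0; pose k : R := `|a| + 1.
have k_gt0 : 0 < k by rewrite ltr_pwDr.
have ka_gt0 : 0 < 2 * k + a.
  by move: (ler_norm (- a)) (normr_ge0 a); rewrite normrN /k; move: `|a| => z; lra.
pose t := b / k; have bE : b = t * k by rewrite mulfVK // gt_eqF.
have : t ^+ 2 * (2 * k + a) <= 0 by have := le0 t; rewrite bE; nra.
rewrite pmulr_lle0 // => t2_le0.
have : t ^+ 2 == 0 by rewrite eq_le t2_le0 sqr_ge0.
by rewrite sqrf_eq0 bE => /eqP ->; rewrite mul0r.
Qed.

Lemma dot_mulmx_max_eigen {R : realType} {n : nat} (C : 'M[R]_n) (u : 'rV[R]_n) mu :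
  (forall v, dot (v *m C) (v *m C) <= mu * dot v v) ->
  dot (u *m C) (u *m C) = mu * dot u u ->
  u *m (C *m C^T) = mu *: u.
Proof.
move=> le_mu u_max; pose P := u *m (C *m C^T) - mu *: u.
have P_orth w : dot P w = 0.
  have -> : dot P w = dot (u *m C) (w *m C) - mu * dot u w.
    by rewrite dotDl dotNl dotZl mulmxA dot_mulmx trmxK.
  apply: (@quadratic_le0_eq0 _ (dot (w *m C) (w *m C) - mu * dot w w)) => t.
  pose v := u + t *: w.
  have -> : 2 * t * (dot (u *m C) (w *m C) - mu * dot u w)
      + t ^+ 2 * (dot (w *m C) (w *m C) - mu * dot w w)
      = dot (v *m C) (v *m C) - mu * dot v v.
    rewrite /v mulmxDl -scalemxAl !dotDl !dotDr !dotZl !dotZr u_max.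
    by rewrite (dotC w u) (dotC (w *m C)); ring.
  by rewrite subr_le0.
by apply/eqP; rewrite -subr_eq0; apply/eqP/dot_eq0; rewrite P_orth.
Qed.

Lemma dot_mulmx_contraction {R : realType} {n : nat} (C : 'M[R]_n) :
  (forall a, eigenvalue (C *m C^T) a -> a < 1) ->
  exists2 c : R, c < 1 & forall v, dot (v *m C) (v *m C) <= c * dot v v.
Proof.
case: n C => [|n] C eig_lt1.
  by exists 0 => // v; rewrite !dotE !big_ord0 mul0r.
have [u uu1 u_max] := dot_mulmx_attains_max C.
exists (dot (u *m C) (u *m C)) => //; apply: eig_lt1; apply/eigenvalueP.
exists u; first by apply: dot_mulmx_max_eigen => //; rewrite uu1 mulr1.
by apply: contra_eq_neq uu1 => ->; rewrite dot0l eq_sym oner_eq0.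
Qed.

Lemma dotD_lt_contraction {R : realType} {n : nat} (c : R) : c < 1 ->
  exists2 e : R, 0 < e & forall d x r : 'rV[R]_n, d != 0 ->
    dot x x <= c * dot d d -> dot r r <= e * dot d d ->
    dot (x + r) (x + r) < dot d d.
Proof.
move=> c_lt1.
(* Weight for Young's inequality [dotD_le], small enough that (1 + s) c < 1. *)
pose s : R := (1 - c) / (2 * (`|c| + 1)).
have s_gt0 : 0 < s by rewrite divr_gt0 ?subr_gt0 ?mulr_gt0 ?ltr_pwDr.
have gap : (1 + s) * c <= 1 - (1 - c) / 2.
  have sc : s * (2 * (`|c| + 1)) = 1 - c by rewrite mulfVK // gt_eqF ?mulr_gt0 ?ltr_pwDr.
  move: sc (ler_norm c) (normr_ge0 c) s_gt0; move: `|c| => z; nra.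
exists (s * (1 - c) / (4 * (s + 1))); first by rewrite divr_gt0 ?mulr_gt0 //; lra.
move=> d x r d_neq0 xc re.
have dd_gt0 : 0 < dot d d.
  by rewrite lt_def dot_ge0 andbT; apply: contra_neq d_neq0 => /dot_eq0.
have re_scaled : (s + 1) * dot r r <= s * (1 - c) / 4 * dot d d.
  have s1_gt0 : 0 < s + 1 by lra.
  have -> : s * (1 - c) / 4 * dot d d
      = (s + 1) * (s * (1 - c) / (4 * (s + 1)) * dot d d).
    by field; rewrite gt_eqF.
  by rewrite ler_pM2l.
have young := dotD_le x r s_gt0.
have s1_ge0 : 0 <= 1 + s by lra.
have xc_scaled : (1 + s) * dot x x <= (1 + s) * c * dot d d.
  by rewrite -mulrA ler_wpM2l.
have gap_scaled : (1 + s) * c * dot d d <= (1 - (1 - c) / 2) * dot d d.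
  by rewrite ler_wpM2r // ltW.
have margin : 0 < (1 - c) * dot d d by rewrite mulr_gt0 ?subr_gt0.
rewrite -(ltr_pM2l s_gt0); nra.
Qed.

Lemma differentiable_dot_remainder {R : realType} {m n : nat}
    {f : 'rV[R]_m -> 'rV[R]_n} {x} {e : R} : differentiable f x -> 0 < e ->
  \forall h \near 0,
    dot (f (x + h) - f x - 'd f x h) (f (x + h) - f x - 'd f x h) <= e * dot h h.
Proof.
move=> df e_gt0; pose k : R := Num.sqrt (e / n.+1%:R).
have k_gt0 : 0 < k by rewrite sqrtr_gt0 divr_gt0.
have /eqaddoP/(_ k k_gt0) := diff_locally df; apply: filterS => h /= rh.
have rE : (f \o +%R^~ x - (cst (f x) + 'd f x)) h = f (x + h) - f x - 'd f x h.
  by rewrite !fctE /= (addrC h) opprD addrA.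
rewrite rE in rh; set r := f (x + h) - f x - 'd f x h in rh *.
have r2 : `|r| ^+ 2 <= k ^+ 2 * `|h| ^+ 2.
  by rewrite -exprMn lerXn2r ?nnegrE // mulr_ge0 // ltW.
have h2 : `|h| ^+ 2 <= dot h h.
  by rewrite -norm2_sq lerXn2r ?nnegrE ?normr_le_norm2 ?sqrtr_ge0.
have k2 : n%:R * k ^+ 2 <= e.
  rewrite /k sqr_sqrtr ?divr_ge0 ?(ltW e_gt0) // mulrCA.
  apply: ler_piMr; first exact: ltW.
  by rewrite ler_pdivrMr ?ltr0Sn // mul1r ler_nat.
apply: le_trans (dot_le_normr r) _.
apply: le_trans (_ : n%:R * (k ^+ 2 * `|h| ^+ 2) <= _); first exact: ler_wpM2l.
rewrite mulrA; apply: le_trans (_ : e * `|h| ^+ 2 <= _); first exact: ler_wpM2r.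
exact/ler_wpM2l/h2/ltW.
Qed.

Lemma local_contraction {R : realType} {n : nat} {Phi : 'rV[R]_n -> 'rV[R]_n} {x C} :
  differentiable Phi x -> Phi x = 0 -> (forall v, 'd Phi x v = v *m C) ->
  (forall a, eigenvalue (C *m C^T) a -> a < 1) ->
  exists2 delta : R, 0 < delta & forall y, 0 < norm2 (y - x) < delta ->
    norm2 (Phi y) ^+ 2 < norm2 (y - x) ^+ 2.
Proof.
move=> dPhi Phix0 dPhiE eig_lt1.
have [c c_lt1 C_le] := dot_mulmx_contraction C eig_lt1.
have [e e_gt0 perturb] := @dotD_lt_contraction R n c c_lt1.
have /nbhs_norm0P [delta delta_gt0 remainder] := differentiable_dot_remainder dPhi e_gt0.
exists delta => // y /andP [d_gt0 d_lt]; set d := y - x in d_gt0 d_lt *.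
have -> : y = x + d by rewrite /d addrC subrK.
have -> : Phi (x + d) = d *m C + (Phi (x + d) - Phi x - 'd Phi x d).
  by rewrite Phix0 dPhiE subr0 [d *m C + _]addrC subrK.
rewrite !norm2_sq; apply: perturb => //.
- apply: contraTneq d_gt0 => ->.
  by rewrite -leNgt /norm2 big1 ?sqrtr0 // => j _; rewrite mxE expr0n.
- by apply: remainder; apply: le_lt_trans (normr_le_norm2 d) d_lt.
Qed.

Lemma is_diff_dtp_residual {R : realType} {U V : normedModType R}
    (f : U -> V) (g : V -> U) x :
  differentiable f x -> differentiable g (f x) ->
  is_diff (f x) (fun y => y - f (x + g y - g (f x)))
    (fun v => v - 'd f x ('d g (f x) v)).
Proof.
move=> /differentiableP dfP /differentiableP dgP.
pose T y := x + g y - g (f x).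
have dTP : is_diff (f x) T ('d g (f x)).
  have : is_diff (f x) (cst x + g - cst (g (f x))) (0 + ('d g (f x) : V -> U) - 0).
    exact: _.
  by rewrite add0r subr0.
have dfTP : is_diff (T (f x)) f ('d f x) by rewrite /T addrK.
exact: (_ : is_diff (f x) (@id V - (f \o T)) (@id V - (('d f x : U -> V) \o 'd g (f x)))).
Qed.

Lemma diff_jacobian {R : realType} {m n : nat} (f : 'rV[R]_m -> 'rV[R]_n) x v :
  'd f x v = v *m 'J f x.
Proof. by rewrite /jacobian mul_rV_lin1. Qed.

Theorem theorem2 (R : realType) (m n : nat)
  (f : 'rV[R]_m -> 'rV[R]_n) (g : 'rV[R]_n -> 'rV[R]_m) (h_prev : 'rV[R]_m) :
  differentiable f h_prev ->
  differentiable g (f h_prev) ->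
  (forall a : R,
     eigenvalue ((1%:M - Jac f h_prev *m Jac g (f h_prev))^T
                 *m (1%:M - Jac f h_prev *m Jac g (f h_prev))) a -> a < 1) ->
  exists2 delta : R, 0 < delta &
    forall hhat : 'rV[R]_n,
      0 < norm2 (hhat - f h_prev) < delta ->
      norm2 (hhat - f (dtp_target g h_prev (f h_prev) hhat)) ^+ 2
        < norm2 (hhat - f h_prev) ^+ 2.
Proof.
move=> df dg eig_lt1.
pose C := 1%:M - 'J g (f h_prev) *m 'J f h_prev.
have [residual_diff residual_diffE] := is_diff_dtp_residual f g h_prev df dg.
have residual_fixed : f h_prev - f (h_prev + g (f h_prev) - g (f h_prev)) = 0.
  by rewrite addrK subrr.
have residual_jacobian v : 'd (fun y => y - f (h_prev + g y - g (f h_prev))) (f h_prev) v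
    = v *m C.
  by rewrite residual_diffE !diff_jacobian mulmxBr mulmx1 mulmxA.
have CCT : C *m C^T = (1%:M - Jac f h_prev *m Jac g (f h_prev))^T
                      *m (1%:M - Jac f h_prev *m Jac g (f h_prev)).
  have -> : 1%:M - Jac f h_prev *m Jac g (f h_prev) = C^T.
    by rewrite /C /Jac linearB /= trmx1 trmx_mul.
  by rewrite trmxK.
have eig_CCT_lt1 a : eigenvalue (C *m C^T) a -> a < 1 by rewrite CCT; exact: eig_lt1.
have [delta delta_gt0 contract] :=
  local_contraction residual_diff residual_fixed residual_jacobian eig_CCT_lt1.
by exists delta.
Qed.
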